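(* Let $f$ be a face. Then (1) $\|\mathbf 1_{\{f\text{ is vacant}\}}\|_f\le\lambda^{-1/4}$ for every $\lambda>0$; and (2) for each $c<\frac14$ and all sufficiently large $\lambda$, $\|\mathbf 1_{\{f\text{ is occupied}\}}\|_f\le1-c\lambda^{-1/2}$.
   Context: Tiles: $T_{(x,y)}=[x-1,x+1]\times[y-1,y+1]$; $\Omega=\{\sigma\in\{0,1\}^{\mathbb{Z}^2}: \sigma(u)=\sigma(v)=1,u\ne v\Rightarrow\mathrm{int}(T_u)\cap\mathrm{int}(T_v)=\emptyset\}$. A face is a unit square $[a,a+1]\times[b,b+1]$, $a,b\in\mathbb{Z}$ (itself a $1\times1$ rectangle); it is vacant in $\sigma$ if contained in no tile of $\sigma$, otherwise occupied. Rectangles: closed axis-parallel with integer corners; $R_{K\times L}=[0,K]\times[0,L]$. For a rectangle $\Lambda$: $w_{\Lambda,\lambda}(\sigma)=\lambda^{-\frac14\#\{\text{vacant faces}\subset\Lambda\}}$; $\Omega^{\mathrm{per}}_\Lambda$ = configurations periodic under $(\mathrm{Width}\Lambda,0),(0,\mathrm{Height}\Lambda)$; $\mu^{\mathrm{per}}_{\Lambda,\lambda}\propto w_{\Lambda,\lambda}$ on $\Omega^{\mathrm{per}}_\Lambda$. For $(\tau f)(\sigma)=f(\sigma\circ\tau)$; for $R=[x_0,x_0+K]\times[y_0,y_0+L]$, $T^R$ is the group generated by reflections through lines $x=x_0+mK$, $y=y_0+nL$; if $2K\mid\mathrm{Width}\Lambda$, $2L\mid\mathrm{Height}\Lambda$,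 $T^R_\Lambda$ is its quotient by translations in $\mathrm{Width}(\Lambda)\mathbb{Z}\times\mathrm{Height}(\Lambda)\mathbb{Z}$, $\|g\|_{R|\Lambda}=[\mu^{\mathrm{per}}_{\Lambda,\lambda}(\prod_{\tau\in T^R_\Lambda}\tau g)]^{1/\#T^R_\Lambda}$ for $g$ depending only on $\sigma|_{R\cap\mathbb{Z}^2}$, and $\|g\|_R=\limsup_{n\to\infty}\|g\|_{R|R_{n!\times n!}}$. *)

From HB Require Import structures.
From mathcomp Require Import all_boot all_order all_algebra.
From mathcomp Require Import all_classical all_reals all_analysis.
Set Implicit Arguments. Unset Strict Implicit. Unset Printing Implicit Defensive.
Import Order.TTheory GRing.Theory Num.Theory.
Local Open Scope ring_scope.
Local Open Scope classical_set_scope.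

(* A configuration sigma : Z^2 -> {0,1}; sigma u = true means a tile at u. *)
Definition config := (int * int -> bool)%type.

Definition cbox (R : realType) (x1 x2 y1 y2 : R) : set (R * R) :=
  [set p | (x1 <= p.1 <= x2) && (y1 <= p.2 <= y2)].
Definition obox (R : realType) (x1 x2 y1 y2 : R) : set (R * R) :=
  [set p | (x1 < p.1 < x2) && (y1 < p.2 < y2)].

Definition tile (R : realType) (u : int * int) : set (R * R) :=
  cbox (u.1%:~R - 1) (u.1%:~R + 1) (u.2%:~R - 1) (u.2%:~R + 1).
Definition tile_int (R : realType) (u : int * int) : set (R * R) :=
  obox (u.1%:~R - 1) (u.1%:~R + 1) (u.2%:~R - 1) (u.2%:~R + 1).

Definition in_Omega (R : realType) (sigma : config) : Prop :=
  forall u v : int * int, u <> v -> sigma u -> sigma v ->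
    @tile_int R u `&` @tile_int R v = set0.

Definition face (R : realType) (a b : int) : set (R * R) :=
  cbox a%:~R (a%:~R + 1) b%:~R (b%:~R + 1).

Definition vacant (R : realType) (sigma : config) (a b : int) : Prop :=
  ~ (exists u : int * int, sigma u /\ @face R a b `<=` @tile R u).

(* Number of vacant faces contained in Lambda = R_{W x H} = [0,W] x [0,H]:
   these faces are exactly [a,a+1]x[b,b+1] with 0 <= a < W, 0 <= b < H. *)
Definition nvacant (R : realType) (sigma : config) (W H : nat) : nat :=
  \sum_(i < W) \sum_(j < H) `[< vacant R sigma (Posz i) (Posz j) >].

Definition weight (R : realType) (lam : R) (W H : nat) (sigma : config) : R :=
  lam `^ (- (4%:R^-1) * (nvacant R sigma W H)%:R).

(* Configurations periodic under (W,0),(0,H) (W,H > 0) are in bijection with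
   their restriction s to [0,W) x [0,H); per_ext s is the periodic extension. *)
Definition per_ext (W H : nat) (s : {ffun 'I_W * 'I_H -> bool}) : config :=
  fun u => [exists i : 'I_W * 'I_H,
     [&& (Posz i.1 == (u.1 %% (Posz W))%Z), (Posz i.2 == (u.2 %% (Posz H))%Z)
       & s i]].

Definition mu_per (R : realType) (lam : R) (W H : nat) (F : config -> R) : R :=
  (\sum_(s : {ffun 'I_W * 'I_H -> bool} | `[< in_Omega R (per_ext s) >])
      weight lam W H (per_ext s) * F (per_ext s)) /
  (\sum_(s : {ffun 'I_W * 'I_H -> bool} | `[< in_Omega R (per_ext s) >])
      weight lam W H (per_ext s)).

(* Reflection group T^R for R = [x0,x0+K] x [y0,y0+L], generated by the
   reflections through x = x0 + mK and y = y0 + nL.  In one coordinate its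
   elements are x |-> x + 2mK and x |-> 2(x0 + mK) - x.  Modulo translations
   by W Z (2K | W) a complete system of representatives is given by
   m in [0, W/(2K)) for both kinds; e = true marks the reflections. *)
Definition refl1 (x0 : int) (K : nat) (e : bool) (m : nat) (x : int) : int :=
  if e then 2 * x0 + 2 * (Posz m) * (Posz K) - x
  else x + 2 * (Posz m) * (Posz K).

Definition tauR (x0 y0 : int) (K L W H : nat)
  (t : (bool * 'I_(W %/ (2 * K))) * (bool * 'I_(H %/ (2 * L))))
  (u : int * int) : int * int :=
  (refl1 x0 K t.1.1 t.1.2 u.1, refl1 y0 L t.2.1 t.2.2 u.2).

(* ||g||_{R|Lambda} = [ mu^per( prod_{tau in T^R_Lambda} tau g ) ]^{1/#T^R_Lambda},
   with (tau g)(sigma) = g(sigma o tau), Lambda = R_{W x H}.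
   (Meaningful when 2K | W and 2L | H.) *)
Definition normRL (R : realType) (lam : R) (x0 y0 : int) (K L W H : nat)
  (g : config -> R) : R :=
  (mu_per lam W H (fun sigma =>
     \prod_(t : (bool * 'I_(W %/ (2 * K))) * (bool * 'I_(H %/ (2 * L))))
        g (fun u => sigma (@tauR x0 y0 K L W H t u))))
  `^ ((#|{: (bool * 'I_(W %/ (2 * K))) * (bool * 'I_(H %/ (2 * L)))}|)%:R^-1).

Definition normR (R : realType) (lam : R) (x0 y0 : int) (K L : nat)
  (g : config -> R) : \bar R :=
  limn_esup (fun n => (normRL lam x0 y0 K L n`! n`! g)%:E).

Definition vacant_ind (R : realType) (a b : int) (sigma : config) : R :=
  (`[< vacant R sigma a b >])%:R.
Definition occupied_ind (R : realType) (a b : int) (sigma : config) : R :=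
  (`[< ~ vacant R sigma a b >])%:R.

From HB Require Import structures.
From mathcomp Require Import all_boot all_order all_algebra.
From mathcomp Require Import all_classical all_reals all_analysis.
From mathcomp Require Import zify ring lra.
Set Implicit Arguments. Unset Strict Implicit. Unset Printing Implicit Defensive.
Import Order.TTheory GRing.Theory Num.Theory.
Local Open Scope ring_scope.

(* On a torus of side 2S the reflections through the lines bounding the face f
   carry f onto every face, so the product defining ||.||_{f|Lambda} is the
   indicator that every face is vacant, resp. occupied.
   (1) Every face vacant forces the empty configuration, of weight
   lambda^(-S^2); the partition function is at least 1, the weight of a
   perfect tiling.
   (2) A configuration with every face occupied is determined by its tiles
   along column 1 and row 1, so there are at most 16^S of them, each of weight
   at most 1.  Conversely, tiling each pair of rows by a strip whose tiles may
   switch parity at any of S - 2 places gives weight mu^(#switches + 1),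
   mu = lambda^(-1/2), whence Z >= mu^S (1 + mu)^(S(S-2)).  As S grows, the
   4S^2-th root of 16^S / Z tends to (1 + mu)^(-1/4), which is below 1 - c mu
   once c < 1/4 and mu is small. *)

Definition face_covered (s : config) (a b : int) : bool :=
  [|| s (a, b), s (a + 1, b), s (a, b + 1) | s (a + 1, b + 1)].

Definition tiles_apart (u v : int * int) : bool :=
  [|| u.1 + 2 <= v.1, v.1 + 2 <= u.1, u.2 + 2 <= v.2 | v.2 + 2 <= u.2].

Definition hard_core (s : config) : Prop :=
  forall u v, u <> v -> s u -> s v -> tiles_apart u v.

Section Geometry.
Variable R : realType.
Local Open Scope classical_set_scope.

Lemma face_sub_tileP (a b : int) (u : int * int) :
  (@face R a b `<=` @tile R u) <-> ((a <= u.1 <= a + 1) && (b <= u.2 <= b + 1)).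
Proof.
rewrite -!(ler_int R) !intrD; split => [sub | ].
- have lo : @face R a b (a%:~R, b%:~R) by rewrite /face /cbox /= !lexx !lerDl ler01.
  have hi : @face R a b (a%:~R + 1, b%:~R + 1).
    by rewrite /face /cbox /= !lexx !lerDl ler01.
  move: (sub _ lo) (sub _ hi); rewrite /tile /cbox /=.
  move=> /andP[/andP[? ?] /andP[? ?]] /andP[/andP[? ?] /andP[? ?]].
  by apply/andP; split; apply/andP; split; lra.
move=> /andP[/andP[? ?] /andP[? ?]] [x y] /andP[/andP[? ?] /andP[? ?]].
by apply/andP; split; apply/andP; split; lra.
Qed.

Lemma vacantP (s : config) a b : vacant R s a b <-> ~~ face_covered s a b.
Proof.
rewrite /vacant /face_covered; split => [nsub | ].
- apply/negP => /or4P[su | su | su | su]; apply: nsub.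
  + by exists (a, b); split; [done | apply/face_sub_tileP => /=; lia].
  + by exists (a + 1, b); split; [done | apply/face_sub_tileP => /=; lia].
  + by exists (a, b + 1); split; [done | apply/face_sub_tileP => /=; lia].
  + by exists (a + 1, b + 1); split; [done | apply/face_sub_tileP => /=; lia].
move=> /negP ncov [[u1 u2] [su /face_sub_tileP /= /andP[/andP[? ?] /andP[? ?]]]].
apply: ncov.
have [E1|E1] : u1 = a \/ u1 = a + 1 by lia.
all: have [E2|E2] : u2 = b \/ u2 = b + 1 by lia.
all: by rewrite -E1 -E2 su ?orbT.
Qed.

Lemma asbool_vacant (s : config) a b : `[< vacant R s a b >] = ~~ face_covered s a b.
Proof. by apply/idP/idP => [/asboolP/vacantP | /vacantP/asboolP]. Qed.

Lemma asbool_occupied (s : config) a b : `[< ~ vacant R s a b >] = face_covered s a b.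
Proof.
apply/asboolP/idP => [nvac | cov /vacantP]; last by rewrite cov.
by apply/negPn/negP => /vacantP.
Qed.

Lemma tile_int_disjointP (u v : int * int) :
  (@tile_int R u `&` @tile_int R v = set0) <-> tiles_apart u v.
Proof.
rewrite /tiles_apart; split => [disj | ].
- apply/negPn/negP; rewrite !negb_or -!ltNge => /and4P[].
  rewrite -!(ltr_int R) !intrD => h1 h2 h3 h4.
  have : (@tile_int R u `&` @tile_int R v)
      ((u.1 + v.1)%:~R / 2, (u.2 + v.2)%:~R / 2).
    by split; rewrite /tile_int /obox /= !intrD; repeat (apply/andP; split); lra.
  by rewrite disj.
move=> sep; apply/seteqP; split => // [[x y]] [].
rewrite /tile_int /obox /= => /andP[/andP[? ?] /andP[? ?]] /andP[/andP[? ?] /andP[? ?]].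
by case/or4P: sep; rewrite -(ler_int R) !intrD => ?; lra.
Qed.

Lemma in_OmegaP (s : config) : in_Omega R s <-> hard_core s.
Proof. by split => hc u v uv su sv; apply/tile_int_disjointP; exact: hc. Qed.

End Geometry.

Section PeriodicExtension.
Variables W H : nat.
Implicit Type s : {ffun 'I_W * 'I_H -> bool}.

Lemma per_ext_periodic s (x y k l : int) :
  per_ext s (x + k * W, y + l * H) = per_ext s (x, y).
Proof.
by apply: eq_existsb => i; rewrite /= addrC (modzMDl k x) addrC (modzMDl l y).
Qed.

Lemma per_ext_ord s (i : 'I_W * 'I_H) : per_ext s (Posz i.1, Posz i.2) = s i.
Proof.
rewrite /per_ext /= !modz_small ?ltz_nat ?ltn_ord //.
apply/existsP/idP => [[[j1 j2] /and3P[/eqP[e1] /eqP[e2] sj]] | si]; last first.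
  by exists i; rewrite !eqxx.
by case: i e1 e2 => i1 i2 /= e1 e2; congr (s (_, _)): sj; apply: val_inj; rewrite /= ?e1 ?e2.
Qed.

Lemma per_ext_ffun (F : nat -> nat -> bool) (x y : int) : (0 < W)%N -> (0 < H)%N ->
  per_ext [ffun i : 'I_W * 'I_H => F i.1 i.2] (x, y) =
  F `|(x %% W)%Z|%N `|(y %% H)%Z|%N.
Proof.
move=> W0 H0.
have xW : (`|(x %% W)%Z| < W)%N.
  by have := ltz_pmod x (_ : 0 < Posz W); rewrite ltz_nat => /(_ W0); lia.
have yH : (`|(y %% H)%Z| < H)%N.
  by have := ltz_pmod y (_ : 0 < Posz H); rewrite ltz_nat => /(_ H0); lia.
have eW : Posz `|(x %% W)%Z| = (x %% W)%Z by apply: gez0_abs; rewrite modz_ge0 // gt_eqF.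
have eH : Posz `|(y %% H)%Z| = (y %% H)%Z by apply: gez0_abs; rewrite modz_ge0 // gt_eqF.
apply/existsP/idP => [[j /and3P[/eqP e1 /eqP e2]] | Fxy].
  by rewrite ffunE -[j.1 : nat]/(absz j.1) -[j.2 : nat]/(absz j.2) e1 e2.
by exists (Ordinal xW, Ordinal yH); rewrite /= eW eH !eqxx ffunE.
Qed.

Lemma face_covered_per_ext_periodic s (x y k l : int) :
  face_covered (per_ext s) (x + k * W) (y + l * H) = face_covered (per_ext s) x y.
Proof.
rewrite /face_covered.
have -> : x + k * W + 1 = x + 1 + k * W by lia.
have -> : y + l * H + 1 = y + 1 + l * H by lia.
by rewrite !per_ext_periodic.
Qed.

End PeriodicExtension.

Definition maps_unit_segment (f : int -> int) (a a' : int) : Prop :=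
  (f a = a' /\ f (a + 1) = a' + 1) \/ (f a = a' + 1 /\ f (a + 1) = a').

Lemma face_covered_comp (s : config) f g a b a' b' :
  maps_unit_segment f a a' -> maps_unit_segment g b b' ->
  face_covered (fun u => s (f u.1, g u.2)) a b = face_covered s a' b'.
Proof.
rewrite /maps_unit_segment /face_covered /= => [[] [-> ->]] [] [-> ->].
all: by case: (s (a', b')); case: (s (a' + 1, b')); case: (s (a', b' + 1));
  case: (s (a' + 1, b' + 1)).
Qed.

(* The element (e, m) of the reflection group maps the column pair {a, a + 1}
   onto {c, c + 1} with c = reflected_corner a e m. *)
Definition reflected_corner (a : int) (e : bool) (m : nat) : int :=
  if e then a + 2 * Posz m - 1 else a + 2 * Posz m.

Lemma refl1_maps_unit_segment (a : int) e m :
  maps_unit_segment (refl1 a 1 e m) a (reflected_corner a e m).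
Proof.
by rewrite /maps_unit_segment /refl1 /reflected_corner; case: e; [right | left]; split; lia.
Qed.

Lemma face_covered_tauR (W H : nat) (s : config) a b t :
  face_covered (fun u => s (@tauR a b 1 1 W H t u)) a b =
  face_covered s (reflected_corner a t.1.1 t.1.2) (reflected_corner b t.2.1 t.2.2).
Proof. exact: face_covered_comp (refl1_maps_unit_segment _ _ _) (refl1_maps_unit_segment _ _ _).
Qed.

Lemma reflected_corner_onto (S : nat) (a x : int) : (0 < S)%N ->
  exists (e : bool) (m : 'I_S) (k : int), reflected_corner a e m = x + k * S.*2.
Proof.
move=> S0; have S2 : (0 : int) < S.*2 by rewrite ltz_nat double_gt0.
set q := ((x - a) %/ S.*2)%Z; set d := `|((x - a) %% S.*2)%Z|%N.
have ed : Posz d = ((x - a) %% S.*2)%Z by apply: gez0_abs; rewrite modz_ge0 // gt_eqF.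
have dlt : (d < S.*2)%N by rewrite -ltz_nat ed ltz_pmod.
have xE : x = a + q * S.*2 + d by have := divz_eq (x - a) S.*2; rewrite -/q -ed; lia.
have dE := odd_double_half d; have uE := uphalf_half d; have mE := divn_eq (uphalf d) S.
exists (odd d), (Ordinal (ltn_pmod (uphalf d) S0)), (- q - Posz (uphalf d %/ S)%N).
by rewrite /reflected_corner /= xE; case: (odd d) dE uE => /= dE uE; lia.
Qed.

Notation refl_index S :=
  ((bool * 'I_(S.*2 %/ (2 * 1))) * (bool * 'I_(S.*2 %/ (2 * 1))))%type.

Lemma card_refl_index S : #|{: refl_index S}| = (S.*2 * S.*2)%N.
Proof. by rewrite !card_prod !card_bool !card_ord muln1 -mul2n mulKn // mulnACA. Qed.

Lemma reflected_faces_cover (S : nat) (s : {ffun 'I_S.*2 * 'I_S.*2 -> bool})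
    (P : pred bool) a b : (0 < S)%N ->
  (forall t : refl_index S,
     P (face_covered (fun u => per_ext s (@tauR a b 1 1 S.*2 S.*2 t u)) a b)) ->
  forall x y, P (face_covered (per_ext s) x y).
Proof.
move=> S0 Ps x y.
have hS : (S.*2 %/ (2 * 1))%N = S by rewrite muln1 -mul2n mulKn.
have [e1 [m1 [k1 E1]]] := reflected_corner_onto a x S0.
have [e2 [m2 [k2 E2]]] := reflected_corner_onto b y S0.
have := Ps ((e1, cast_ord (esym hS) m1), (e2, cast_ord (esym hS) m2)).
by rewrite face_covered_tauR /= E1 E2 face_covered_per_ext_periodic.
Qed.

Lemma prodr_indicator (R : comPzSemiRingType) (T : finType) (P : pred T) :
  \prod_(t : T) ((P t)%:R : R) = ([forall t, P t])%:R.
Proof.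
have [/forallP Pall | /forallPn [t0 nPt0]] := boolP [forall t, P t].
  by rewrite big1 // => t _; rewrite Pall.
by rewrite (bigD1 t0) //= (negbTE nPt0) mul0r.
Qed.

Definition all_covered (s : config) : Prop := forall x y, face_covered s x y.

Definition occupied_corner (s : config) (x y p q : int) : Prop :=
  s (p, q) /\ (p = x \/ p = x + 1) /\ (q = y \/ q = y + 1).

Definition transpose (s : config) : config := fun u => s (u.2, u.1).

Lemma hard_core_transpose s : hard_core s -> hard_core (transpose s).
Proof.
move=> hc [u1 u2] [v1 v2] uv su sv.
have uv' : (u2, u1) <> (v2, v1) by move=> [E2 E1]; apply: uv; rewrite E1 E2.
by have := hc _ _ uv' su sv; rewrite /tiles_apart /=; lia.
Qed.

Lemma all_covered_transpose s : all_covered s -> all_covered (transpose s).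
Proof.
move=> cov x y; move: (cov y x); rewrite /face_covered /transpose /=.
by case: (s (y, x)); case: (s (y + 1, x)); case: (s (y, x + 1)).
Qed.

Lemma occupied_corner_transpose s x y p q :
  occupied_corner s y x q p -> occupied_corner (transpose s) x y p q.
Proof. by move=> [? [? ?]]. Qed.

(* For a perfect configuration: whether the face (0, y) is covered from column 1. *)
Definition row_bit (s : config) (y : int) : bool := s (1, y) || s (1, y + 1).

Section PerfectConfiguration.
Variable s : config.
Hypotheses (hc : hard_core s) (cov : all_covered s).

Lemma occupied_corner_exists x y : exists p q, occupied_corner s x y p q.
Proof.
have /or4P[sxy | sxy | sxy | sxy] := cov x y.
- by exists x, y; split => //; split; left.
- by exists (x + 1), y; split => //; split; [right | left].
- by exists x, (y + 1); split => //; split; [left | right].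
- by exists (x + 1), (y + 1); split => //; split; right.
Qed.

Lemma occupied_corner_uniq x y p q p' q' :
  occupied_corner s x y p q -> occupied_corner s x y p' q' -> p = p' /\ q = q'.
Proof.
move=> [spq [? ?]] [spq' [? ?]].
have [/eqP[-> ->] // | ne] := boolP ((p, q) == (p', q')).
by have := hc (elimN eqP ne) spq spq'; rewrite /tiles_apart /=; lia.
Qed.

Lemma occupied_corner_step x y p q p' q' :
  occupied_corner s x y p q -> occupied_corner s (x + 1) y p' q' ->
  p' = if p == x + 1 then x + 1 else x + 2.
Proof.
move=> c c'; case: ifP => [/eqP px | /negbT px].
  have c1 : occupied_corner s (x + 1) y p q.
    by case: c => spq [_ yq]; split => //; split => //; left.
  by have [<- _] := occupied_corner_uniq c1 c'.
case: c c' => [spq [[pE | pE] yq]] [spq' [[p'E | p'E] yq']]; try lia.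
have ne : (p, q) <> (p', q') by move=> [E _]; lia.
by have := hc ne spq spq'; rewrite /tiles_apart /=; lia.
Qed.

Lemma occupied_corner_x0 y p q : occupied_corner s 0 y p q -> (p == 1) = row_bit s y.
Proof.
move=> c; have [spq [[p0 | p1] yq]] := c; last first.
  by rewrite add0r in p1; subst p; rewrite eqxx /row_bit; case: yq => <-; rewrite spq ?orbT.
rewrite p0 /row_bit; apply/esym/negbTE/negP => /orP[s1 | s1].
- have c1 : occupied_corner s 0 y 1 y by split => //; split; [right | left].
  by have [] := occupied_corner_uniq c c1; lia.
- have c1 : occupied_corner s 0 y 1 (y + 1) by split => //; split; right.
  by have [] := occupied_corner_uniq c c1; lia.
Qed.

End PerfectConfiguration.

Section TwoPerfectConfigurations.
Variables s s' : config.
Hypotheses (hc : hard_core s) (cov : all_covered s).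
Hypotheses (hc' : hard_core s') (cov' : all_covered s').

Lemma occupied_corner_row_determined y : row_bit s y = row_bit s' y ->
  forall (n : nat) p q p' q',
  occupied_corner s n y p q -> occupied_corner s' n y p' q' -> p = p'.
Proof.
move=> ry; elim=> [|n IHn] p q p' q' c c'.
  have := occupied_corner_x0 hc c; rewrite ry -(occupied_corner_x0 hc' c').
  by case: c c' => [_ [[] -> _]] [_ [[] -> _]]; rewrite ?add0r; lia.
have [p0 [q0 c0]] := occupied_corner_exists cov n y.
have [p0' [q0' c0']] := occupied_corner_exists cov' n y.
have E0 := IHn _ _ _ _ c0 c0'; rewrite E0 in c0.
have Sn : Posz n.+1 = n + 1 by lia.
rewrite Sn in c c'.
by rewrite (occupied_corner_step hc c0 c) (occupied_corner_step hc' c0' c').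
Qed.

End TwoPerfectConfigurations.

Lemma perfect_determined s s' :
  hard_core s -> all_covered s -> hard_core s' -> all_covered s' ->
  forall x y : nat, row_bit s y = row_bit s' y ->
  row_bit (transpose s) x = row_bit (transpose s') x ->
  s (Posz x, Posz y) -> s' (Posz x, Posz y).
Proof.
move=> hc cov hc' cov' x y ry rx sxy.
have c : occupied_corner s x y x y by split => //; split; left.
have [p' [q' c']] := occupied_corner_exists cov' x y.
have -> := occupied_corner_row_determined hc cov hc' cov' ry c c'.
have -> := occupied_corner_row_determined (hard_core_transpose hc)
  (all_covered_transpose cov) (hard_core_transpose hc') (all_covered_transpose cov') rx
  (occupied_corner_transpose c) (occupied_corner_transpose c').
by case: c'.
Qed.

Definition perfect_tori (N : nat) : {set {ffun 'I_N * 'I_N -> bool}} :=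
  [set s | `[< hard_core (per_ext s) >] && `[< all_covered (per_ext s) >]].

Lemma card_perfect_tori N : (#|perfect_tori N| <= 2 ^ N * 2 ^ N)%N.
Proof.
pose bits (s : {ffun 'I_N * 'I_N -> bool}) :=
  ([ffun y : 'I_N => row_bit (per_ext s) y],
   [ffun x : 'I_N => row_bit (transpose (per_ext s)) x]).
have bits_inj : {in perfect_tori N &, injective bits}.
  move=> s s'; rewrite !inE.
  move=> /andP[/asboolP hc /asboolP cov] /andP[/asboolP hc' /asboolP cov'].
  move=> -[/ffunP ry /ffunP rx]; apply/ffunP => i; rewrite -!per_ext_ord.
  have := ry i.2; have := rx i.1; rewrite !ffunE => {}rx {}ry.
  apply/idP/idP; first exact: perfect_determined.
  exact: perfect_determined (esym ry) (esym rx).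
rewrite -(card_in_imset bits_inj); apply: leq_trans (max_card _) _.
by rewrite card_prod !card_ffun !card_bool !card_ord.
Qed.

Local Close Scope ring_scope.

(* One horizontal strip of a torus of width 2S: tiles sit at the odd columns
   while the phase is [false] and at the even ones while it is [true]; the
   phase may switch after each of the first M blocks (bit [b j]) and is reset
   to [false] at the end so that the strip closes up. *)
Fixpoint strip_phase (M : nat) (b : nat -> bool) (m : nat) : bool :=
  if m is m'.+1 then (m <= M) && (strip_phase M b m' (+) b m') else false.

Definition strip (M : nat) (b : nat -> bool) (x : nat) : bool :=
  if odd x then ~~ strip_phase M b x./2
  else [&& 0 < x, strip_phase M b x./2.-1 & strip_phase M b x./2].

Section Strip.
Variables (M : nat) (b : nat -> bool).
Local Notation ph := (strip_phase M b).

Lemma strip_odd m : strip M b m.*2.+1 = ~~ ph m.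
Proof. by rewrite /strip oddS odd_double /= uphalf_double. Qed.

Lemma strip_even m : strip M b m.*2.+2 = ph m && ph m.+1.
Proof. by rewrite /strip -doubleS odd_double doubleK. Qed.

Lemma strip_no_adjacent x : ~~ (strip M b x && strip M b x.+1).
Proof.
rewrite -[x]odd_double_half; case: (odd x); rewrite ?add0n ?add1n.
  by rewrite strip_odd strip_even; case: (ph _).
case: x./2 => [|m] //.
by rewrite strip_odd doubleS strip_even; case: (ph m.+1); rewrite ?andbF.
Qed.

Lemma strip_phase_large m : M < m -> ph m = false.
Proof. by case: m => //= m; rewrite ltnNge => /negbTE ->. Qed.

End Strip.

Lemma sum_ord_double_pairs (h : nat -> nat) S : 0 < S ->
  \sum_(i < S.*2) h i = h 0 + \sum_(j < S.-1) (h j.*2.+1 + h j.*2.+2) + h S.*2.-1.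
Proof.
case: S => // S _; elim: S => [|S IH].
  by rewrite /= !big_ord_recr !big_ord0 /= add0n addn0.
rewrite doubleS (big_ord_recr (S.+1).*2.+1) big_ord_recr /= IH.
by rewrite [in RHS]big_ord_recr /= !doubleS /= !addnA.
Qed.

Lemma sum_ord_half (h : nat -> nat) S : \sum_(j < S.*2) h j./2 = (\sum_(k < S) h k).*2.
Proof.
elim: S => [|S IH]; first by rewrite !big_ord0.
rewrite doubleS !big_ord_recr /= IH doubleD /= uphalf_double doubleK.
by rewrite -[(h S).*2]addnn addnA.
Qed.

Section StripGaps.
Variables (S : nat) (b : nat -> bool).
Hypothesis S2 : 2 <= S.
Local Notation M := (S - 2).
Local Notation ph := (strip_phase M b).

Definition strip_on (x : nat) : bool := (x < S.*2) && strip M b x.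

Definition strip_gap (x : nat) : nat := ~~ (strip_on x || strip_on x.+1).

Lemma strip_gaps_le_switches :
  \sum_(x < S.*2) strip_gap x <= \sum_(j < S.-1) (ph j != ph j.+1).
Proof.
rewrite sum_ord_double_pairs; last by lia.
have -> : strip_gap 0 = 0.
  have S1 : 1 < S.*2 by lia.
  by rewrite /strip_gap /strip_on (strip_odd M b 0) S1 orbT.
have -> : strip_gap S.*2.-1 = 0.
  have -> : S.*2.-1 = (S.-1).*2.+1 by lia.
  rewrite /strip_gap /strip_on strip_odd strip_phase_large; last by lia.
  by have -> : (S.-1).*2.+1 < S.*2 by lia.
rewrite add0n addn0; apply: leq_sum => j _.
have hj := ltn_ord j.
rewrite /strip_gap /strip_on.
have [-> -> ->] : [/\ j.*2.+1 < S.*2, j.*2.+2 < S.*2 & j.*2.+3 < S.*2] by split; lia.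
rewrite (strip_odd M b j) (strip_even M b j) (strip_odd M b j.+1).
by case: (ph j); case: (ph j.+1).
Qed.

Lemma phase_switches_le : \sum_(j < S.-1) (ph j != ph j.+1) <= \sum_(j < M) b j + 1.
Proof.
have -> : S.-1 = M.+1 by lia.
rewrite big_ord_recr /=; apply: leq_add; last by case: (_ != _).
apply/eq_leq/eq_bigr => j _ /=.
by rewrite ltn_ord; case: (ph j); case: (b j).
Qed.

Lemma phase_switches0 : (forall j, b j = false) -> \sum_(j < S.-1) (ph j != ph j.+1) = 0.
Proof.
move=> b0; have ph0 m : ph m = false by elim: m => //= m ->; rewrite b0 andbF.
by rewrite big1 // => j _; rewrite !ph0.
Qed.

End StripGaps.

Lemma absz_modz_small (N i : nat) : i < N -> `|(Posz i %% Posz N)%Z|%N = i.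
Proof. by move=> iN; rewrite modz_small // ltz_nat iN. Qed.

Lemma absz_modzD1 (N : nat) (z : int) : 0 < N ->
  `|((z + 1) %% N)%Z|%N = if `|(z %% N)%Z|%N == N.-1 then 0 else `|(z %% N)%Z|%N.+1.
Proof.
move=> N0; have N0' : (0 < Posz N)%R by rewrite ltz_nat.
rewrite -modzDml.
have := ltz_pmod z N0'; have := modz_ge0 z (lt0r_neq0 N0').
case: eqP => E lt ge.
  have -> : ((z %% N)%Z + 1 = Posz N)%R by lia.
  by rewrite modzz.
by rewrite modz_small; lia.
Qed.

Section StripConfiguration.
Variable S : nat.
Hypothesis S2 : 2 <= S.
Local Notation N := S.*2.
Local Notation M := (S - 2).
Implicit Type B : {ffun 'I_S * 'I_M -> bool}.

Definition strip_bits B (k j : nat) : bool :=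
  if (insub k : option 'I_S, insub j : option 'I_M) is (Some k', Some j')
  then B (k', j') else false.

Lemma strip_bitsE B (k : 'I_S) (j : 'I_M) : strip_bits B k j = B (k, j).
Proof. by rewrite /strip_bits !valK. Qed.

Definition strip_site B (x y : nat) : bool := odd y && strip M (strip_bits B y./2) x.

Definition strip_config B : {ffun 'I_N * 'I_N -> bool} :=
  [ffun i : 'I_N * 'I_N => strip_site B i.1 i.2].

Lemma N_gt0 : 0 < N. Proof. by rewrite double_gt0 (ltn_trans _ S2). Qed.

Lemma per_ext_strip_config B (x y : int) :
  per_ext (strip_config B) (x, y) = strip_site B `|(x %% N)%Z| `|(y %% N)%Z|.
Proof. exact: per_ext_ffun N_gt0 N_gt0. Qed.

Lemma per_ext_strip_config_small B (x y : nat) : x <= N -> y <= N ->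
  per_ext (strip_config B) (Posz x, Posz y) = (x < N) && (y < N) && strip_site B x y.
Proof.
move=> xN yN; rewrite per_ext_strip_config.
have [-> | ltx] := eqVneq x N; first by rewrite modzz /strip_site /= ltnn ?andbF.
have [-> | lty] := eqVneq y N; first by rewrite modzz /strip_site /= ltnn ?andbF.
by rewrite !absz_modz_small ?ltn_neqAle ?ltx ?lty ?xN ?yN.
Qed.

Lemma strip_config_hard_core B : hard_core (per_ext (strip_config B)).
Proof.
have N0 := N_gt0.
have no_vert x y x' :
    per_ext (strip_config B) (x, y) -> ~~ per_ext (strip_config B) (x', (y + 1)%R).
  rewrite !per_ext_strip_config absz_modzD1 // /strip_site.
  by case: eqP => [-> | _] /andP[oy _]; rewrite ?oddS ?oy.
have no_horiz x y :
    per_ext (strip_config B) (x, y) -> ~~ per_ext (strip_config B) ((x + 1)%R, y).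
  rewrite !per_ext_strip_config absz_modzD1 // /strip_site.
  case: eqP => [_ | _] /andP[oy sx]; first by rewrite andbF.
  apply/negP => /andP[_ sx1].
  by have := strip_no_adjacent M (strip_bits B `|(y %% N)%Z|./2) `|(x %% N)%Z|; rewrite sx sx1.
move=> [u1 u2] [v1 v2] uv su sv; apply/negPn/negP; rewrite /tiles_apart /= => far.
have [E|[E|E]] : (v2 = u2 + 1 \/ u2 = v2 + 1 \/ u2 = v2)%R by lia.
- by move: sv; rewrite E; apply/negP; exact: no_vert su.
- by move: su; rewrite E; apply/negP; exact: no_vert sv.
have [E'|[E'|E']] : (v1 = u1 + 1 \/ u1 = v1 + 1 \/ u1 = v1)%R by lia.
- by move: sv; rewrite E' -E; apply/negP; exact: no_horiz su.
- by move: su; rewrite E' E; apply/negP; exact: no_horiz sv.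
- by apply: uv; rewrite E E'.
Qed.

Lemma strip_config_covered B (i j : nat) : i < N -> j < N ->
  face_covered (per_ext (strip_config B)) i j =
  strip_on S (strip_bits B j./2) i || strip_on S (strip_bits B j./2) i.+1.
Proof.
move=> iN jN; rewrite /face_covered.
have [-> ->] : (Posz i + 1 = i.+1 /\ Posz j + 1 = j.+1)%R by split; lia.
rewrite !per_ext_strip_config_small ?(ltnW iN) ?(ltnW jN) //.
rewrite /strip_site /strip_on iN jN /=.
have [oj | ej] := boolP (odd j); first by rewrite /= !andbT !andbF !orbF.
have j1N : j.+1 < N by move: jN ej; rewrite -[j]odd_double_half; case: (odd j) => //=; lia.
by rewrite j1N uphalf_half (negbTE ej) /= !andbT add0n andbF.
Qed.

End StripConfiguration.

Section StripCount.
Variable R : realType.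
Variable S : nat.
Hypothesis S2 : 2 <= S.
Local Notation N := S.*2.
Local Notation M := (S - 2).
Implicit Type B : {ffun 'I_S * 'I_M -> bool}.

Lemma nvacant_strip_config B : nvacant R (per_ext (strip_config B)) N N =
  (\sum_(k < S) \sum_(x < N) strip_gap S (strip_bits B k) x).*2.
Proof.
rewrite /nvacant -(sum_ord_half (fun k => \sum_(i < N) strip_gap S (strip_bits B k) i)).
rewrite exchange_big; apply: eq_bigr => i _; apply: eq_bigr => j _.
by rewrite asbool_vacant strip_config_covered.
Qed.

(* Each strip pays one vacancy pair per phase switch, plus one for closing up. *)
Definition strip_cost B : nat := \sum_(k < S) (\sum_(j < M) B (k, j) + 1).

Lemma nvacant_strip_config_le B :
  nvacant R (per_ext (strip_config B)) N N <= (strip_cost B).*2.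
Proof.
rewrite nvacant_strip_config leq_double; apply: leq_sum => k _.
apply: leq_trans (strip_gaps_le_switches _ S2) _.
apply: leq_trans (phase_switches_le _ S2) _.
by rewrite leq_add2r; apply/eq_leq/eq_bigr => j _; rewrite strip_bitsE.
Qed.

Lemma nvacant_strip_config0 : nvacant R (per_ext (@strip_config S [ffun => false])) N N = 0.
Proof.
rewrite nvacant_strip_config big1 // => k _; apply/eqP; rewrite -leqn0.
apply: leq_trans (strip_gaps_le_switches _ S2) _.
rewrite phase_switches0 // => j; rewrite /strip_bits.
case: (@insub _ (fun x => x < S) _ k) => [k'|] //.
by case: (@insub _ (fun x => x < M) _ j) => [j'|] //; rewrite ffunE.
Qed.

Lemma strip_site_odd B (m k : nat) :
  strip_site B m.*2.+1 k.*2.+1 = ~~ strip_phase M (strip_bits B k) m.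
Proof. by rewrite /strip_site oddS odd_double /= uphalf_double strip_odd. Qed.

Lemma strip_config_inj : injective (@strip_config S).
Proof.
move=> B B' EB; apply/ffunP => -[k j].
have ph_eq m :
    m < S -> strip_phase M (strip_bits B k) m = strip_phase M (strip_bits B' k) m.
  move=> mS; apply: negb_inj; rewrite -!strip_site_odd.
  have odd_lt n : n < S -> n.*2.+1 < N by move=> nS; rewrite -doubleS leq_double.
  by move/ffunP/(_ (Ordinal (odd_lt _ mS), Ordinal (odd_lt _ (ltn_ord k)))): EB; rewrite !ffunE.
have bitE (b : nat -> bool) : b j = strip_phase M b j (+) strip_phase M b j.+1.
  by rewrite /= ltn_ord addKb.
rewrite -!strip_bitsE (bitE (strip_bits B k)) (bitE (strip_bits B' k)).
by rewrite !ph_eq //; have := ltn_ord j; lia.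
Qed.

End StripCount.

Local Open Scope ring_scope.

Lemma ler_sum_inj (R : numDomainType) (I J : finType) (h : I -> J) (P : pred J) (F : J -> R) :
  injective h -> (forall i, P (h i)) -> (forall j, 0 <= F j) ->
  \sum_i F (h i) <= \sum_(j | P j) F j.
Proof.
move=> h_inj Ph F0.
rewrite -[X in X <= _](big_imset _ (in2W h_inj)) /=.
rewrite [X in _ <= X]big_mkcond [X in X <= _]big_mkcond /=; apply: ler_sum => j _.
by case: ifP => [/imsetP[i _ ->] | _]; rewrite ?Ph //; case: ifP.
Qed.

Section Partition.
Variable R : realType.
Implicit Type lam : R.

Definition partition_function lam (N : nat) : R :=
  \sum_(s : {ffun 'I_N * 'I_N -> bool} | `[< in_Omega R (per_ext s) >])
    weight lam N N (per_ext s).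

Lemma weight_ge0 lam W H s : 0 <= weight lam W H s.
Proof. exact: powR_ge0. Qed.

Lemma weight_le1 lam W H s : 1 <= lam -> weight lam W H s <= 1.
Proof.
by move=> lam1; rewrite /weight -[X in _ <= X](powRr0 lam); apply: ler_powR.
Qed.

Lemma weight_ge_pow lam W H s (T : nat) : 1 <= lam ->
  (nvacant R s W H <= T.*2)%N -> (lam `^ (- 2^-1)) ^+ T <= weight lam W H s.
Proof.
move=> lam1 nvacT; rewrite /weight -powR_mulrn ?powR_ge0 // -powRrM.
apply: ler_powR => //; move: nvacT; rewrite -(ler_nat R) -mul2n natrM; lra.
Qed.

Lemma sum_strip_cost (S : nat) (mu : R) :
  \sum_(B : {ffun 'I_S * 'I_(S - 2) -> bool}) mu ^+ strip_cost B =
  mu ^+ S * (1 + mu) ^+ (S * (S - 2)).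
Proof.
transitivity (\sum_(B : {ffun 'I_S * 'I_(S - 2) -> bool})
               mu ^+ S * \prod_(p : 'I_S * 'I_(S - 2)) mu ^+ B p).
  apply: eq_bigr => B _; rewrite /strip_cost expr_sum.
  under eq_bigr do rewrite exprD expr1 expr_sum.
  rewrite big_split /= mulrC prodr_const card_ord pair_big /=.
  by congr (_ * _); apply: eq_bigr => -[k j].
rewrite -mulr_sumr -(bigA_distr_bigA (fun _ (b : bool) => mu ^+ b)) /=.
under eq_bigr do rewrite big_bool /= expr1 expr0 addrC.
by rewrite prodr_const card_prod !card_ord.
Qed.

Variable S : nat.
Hypothesis S2 : (2 <= S)%N.

Lemma partition_function_ge1 lam : 1 <= partition_function lam S.*2.
Proof.
rewrite /partition_function (bigD1 (@strip_config S [ffun => false])) /=; last first.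
  exact/asboolP/in_OmegaP/strip_config_hard_core.
rewrite {1}/weight nvacant_strip_config0 // mulr0 powRr0 lerDl.
by apply: sumr_ge0 => s _; exact: weight_ge0.
Qed.

Lemma partition_function_ge_strips lam : 1 <= lam ->
  (lam `^ (- 2^-1)) ^+ S * (1 + lam `^ (- 2^-1)) ^+ (S * (S - 2)) <=
  partition_function lam S.*2.
Proof.
move=> lam1; rewrite -sum_strip_cost.
apply: le_trans (ler_sum_inj (strip_config_inj S2) _ (fun s => weight_ge0 _ _ _ _)).
  by apply: ler_sum => B _; apply: weight_ge_pow => //; exact: nvacant_strip_config_le.
by move=> B; apply/asboolP/in_OmegaP/strip_config_hard_core.
Qed.

End Partition.

Section PeriodicMeasure.
Variable R : realType.
Variables (lam : R) (N : nat).
Implicit Type G : config -> R.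

Lemma mu_per_ge0 G : (forall s, 0 <= G s) -> 0 <= mu_per lam N N G.
Proof.
move=> G0; apply: divr_ge0; apply: sumr_ge0 => s _; last exact: weight_ge0.
by rewrite mulr_ge0 ?weight_ge0.
Qed.

Lemma mu_per_le G (P : {set {ffun 'I_N * 'I_N -> bool}}) (w Z : R) :
  0 < Z -> Z <= partition_function lam N ->
  (forall s, in_Omega R (per_ext s) -> 0 <= G (per_ext s) <= (s \in P)%:R) ->
  (forall s, s \in P -> weight lam N N (per_ext s) <= w) ->
  mu_per lam N N G <= #|P|%:R * w / Z.
Proof.
move=> Z0 ZZ GP wP; rewrite /mu_per.
set num := \sum_(s | _) _ * _.
have num_ge0 : 0 <= num.
  by apply: sumr_ge0 => s /asboolP/GP/andP[? _]; rewrite mulr_ge0 ?weight_ge0.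
have num_le : num <= \sum_(s in P) weight lam N N (per_ext s).
  rewrite [X in _ <= X]big_mkcond [X in X <= _]big_mkcond /=; apply: ler_sum => s _.
  case: ifP => [/asboolP Om | _]; last by case: ifP => // _; exact: weight_ge0.
  have /andP[G0 GP1] := GP s Om; case: (s \in P) GP1 => /= GP1.
    by rewrite -[X in _ <= X]mulr1 ler_wpM2l ?weight_ge0.
  by rewrite (@le_anti _ _ (G _) 0) ?GP1 // mulr0.
have sum_le : \sum_(s in P) weight lam N N (per_ext s) <= #|P|%:R * w.
  by rewrite mulr_natl -sumr_const; apply: ler_sum => s; exact: wP.
apply: le_trans (ler_wpM2l num_ge0 (_ : _ <= Z^-1)) _.
  by rewrite lef_pV2 // posrE (lt_le_trans Z0).
by rewrite ler_pM2r ?invr_gt0 //; exact: le_trans num_le sum_le.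
Qed.

End PeriodicMeasure.

Lemma perfect_ratio_le (R : realFieldType) (mu A : R) (S : nat) :
  0 < mu -> 0 <= A -> (2 <= S)%N ->
  16 * (1 + mu) ^+ 2 <= mu * ((1 + mu) * A ^+ 4) ^+ S ->
  16 ^+ S <= A ^+ (S.*2 * S.*2) * (mu ^+ S * (1 + mu) ^+ (S * (S - 2))).
Proof.
move=> mu0 A0 S2 hyp.
have mu1 : 0 < 1 + mu by lra.
have := @lerXn2r _ S (16 * (1 + mu) ^+ 2) (mu * ((1 + mu) * A ^+ 4) ^+ S).
have X0 : 0 <= 16 * (1 + mu) ^+ 2 by rewrite mulr_ge0 ?exprn_ge0 ?ltW.
have Y0 : 0 <= mu * ((1 + mu) * A ^+ 4) ^+ S.
  exact: mulr_ge0 (ltW mu0) (exprn_ge0 _ (mulr_ge0 (ltW mu1) (exprn_ge0 _ A0))).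
rewrite !nnegrE => /(_ X0 Y0 hyp).
have SS : (S * S = S * (S - 2) + 2 * S)%N by clear -S2; case: S S2 => [|[|T]] // _; nia.
have NN : (4 * (S * S) = S.*2 * S.*2)%N by lia.
have -> : (16 * (1 + mu) ^+ 2) ^+ S = 16 ^+ S * (1 + mu) ^+ (2 * S) by rewrite exprMn exprM.
have -> : (mu * ((1 + mu) * A ^+ 4) ^+ S) ^+ S =
    mu ^+ S * ((1 + mu) ^+ (S * S) * A ^+ (4 * (S * S))).
  by rewrite exprMn -exprM exprMn -exprM.
rewrite NN SS exprD.
set P := (1 + mu) ^+ (2 * S); set Q := (1 + mu) ^+ (S * (S - 2)).
have P0 : 0 < P by rewrite exprn_gt0.
have -> : mu ^+ S * (Q * P * A ^+ (S.*2 * S.*2)) = A ^+ (S.*2 * S.*2) * (mu ^+ S * Q) * P.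
  by ring.
by rewrite ler_pM2r.
Qed.

Lemma all_vacant_empty N (s : {ffun 'I_N * 'I_N -> bool}) :
  (forall x y, ~~ face_covered (per_ext s) x y) -> s = [ffun => false].
Proof.
move=> vac; apply/ffunP => i; rewrite ffunE -per_ext_ord.
by have := vac i.1 i.2; rewrite /face_covered; case: (per_ext s _).
Qed.

Lemma nvacant_empty (R : realType) N :
  nvacant R (per_ext [ffun _ : 'I_N * 'I_N => false]) N N = (N * N)%N.
Proof.
have empty u : per_ext [ffun _ : 'I_N * 'I_N => false] u = false.
  by apply/negbTE/existsPn => p; rewrite ffunE !andbF.
rewrite /nvacant (eq_bigr (fun=> N)); first by rewrite sum_nat_const card_ord.
move=> i _; rewrite (eq_bigr (fun=> 1%N)); first by rewrite sum_nat_const card_ord muln1.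
by move=> j _; rewrite asbool_vacant /face_covered !empty.
Qed.

Section ReflectionNorm.
Variable R : realType.
Variables (lam : R) (a b : int) (S : nat).
Hypothesis S2 : (2 <= S)%N.
Local Notation N := S.*2.
Local Notation reflected g sigma :=
  (\prod_(t : refl_index S) g (fun u => sigma (@tauR a b 1 1 N N t u))).

Lemma normRL_le (g : config -> R) (x : R) :
  (forall s, 0 <= g s) -> 0 <= x ->
  mu_per lam N N (fun sigma => reflected g sigma) <= x ^+ (N * N) ->
  normRL lam a b 1 1 N N g <= x.
Proof.
move=> g0 x0 mu_le; rewrite /normRL card_refl_index.
have NN0 : ((N * N)%N%:R : R) != 0.
  by rewrite pnatr_eq0 muln_eq0 double_eq0 orbb -lt0n (ltn_trans _ S2).
apply: le_trans (_ : (x ^+ (N * N)) `^ (N * N)%:R^-1 <= _).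
  apply: ge0_ler_powR; rewrite ?nnegrE ?exprn_ge0 ?invr_ge0 //.
  by apply: mu_per_ge0 => s; apply: prodr_ge0.
by rewrite -powR_mulrn // -powRrM mulfV // powRr1.
Qed.

Lemma reflected_vacant (sigma : config) : reflected (vacant_ind R a b) sigma =
  [forall t : refl_index S, ~~ face_covered (fun u => sigma (@tauR a b 1 1 N N t u)) a b]%:R.
Proof.
by rewrite -prodr_indicator; apply: eq_bigr => t _; rewrite /vacant_ind asbool_vacant.
Qed.

Lemma reflected_occupied (sigma : config) : reflected (occupied_ind R a b) sigma =
  [forall t : refl_index S, face_covered (fun u => sigma (@tauR a b 1 1 N N t u)) a b]%:R.
Proof.
by rewrite -prodr_indicator; apply: eq_bigr => t _; rewrite /occupied_ind asbool_occupied.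
Qed.

Lemma normRL_vacant_le :
  0 < lam -> normRL lam a b 1 1 N N (vacant_ind R a b) <= lam `^ (- 4^-1).
Proof.
move=> lam0; apply: normRL_le => [s | | ]; [by rewrite /vacant_ind ler0n | exact: powR_ge0 |].
rewrite -powR_mulrn ?powR_ge0 // -powRrM.
set w := lam `^ _.
apply: le_trans (mu_per_le (P := [set [ffun => false]]) (w := w) ltr01
  (partition_function_ge1 S2 lam) _ _) _.
- move=> s _; rewrite reflected_vacant ler0n /=.
  set all_vac := [forall t, _]; have [/forallP {}all_vac | _] := boolP all_vac; last by [].
  by rewrite (all_vacant_empty (reflected_faces_cover (P := negb) (ltnW S2) all_vac)) set11.
- by move=> s /set1P ->; rewrite /weight nvacant_empty.
- by rewrite cards1 mul1r divr1.
Qed.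

Lemma card_perfect_tori_le : (#|perfect_tori N|%:R : R) <= 16 ^+ S.
Proof.
have -> : (16 : R) ^+ S = (2 ^ N * 2 ^ N)%N%:R.
  by rewrite natrM !natrX -exprD addnn -!mul2n mulnA exprM; congr (_ ^+ _); rewrite -natrX.
by rewrite (ler_nat R) card_perfect_tori.
Qed.

Lemma normRL_occupied_le (A : R) : 1 <= lam -> 0 <= A ->
  16 * (1 + lam `^ (- 2^-1)) ^+ 2 <=
    lam `^ (- 2^-1) * ((1 + lam `^ (- 2^-1)) * A ^+ 4) ^+ S ->
  normRL lam a b 1 1 N N (occupied_ind R a b) <= A.
Proof.
move=> lam1 A0 big; apply: normRL_le => [s | // | ]; first by rewrite /occupied_ind ler0n.
have mu0 : 0 < lam `^ (- 2^-1) by apply: powR_gt0; lra.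
have Z0 : 0 < lam `^ (- 2^-1) ^+ S * (1 + lam `^ (- 2^-1)) ^+ (S * (S - 2)).
  by rewrite mulr_gt0 // exprn_gt0 // addr_gt0.
apply: le_trans (mu_per_le (P := perfect_tori N) (w := 1) Z0
  (partition_function_ge_strips S2 lam1) _ _) _.
- move=> s /in_OmegaP hc; rewrite reflected_occupied ler0n /=.
  set all_occ := [forall t, _]; have [/forallP {}all_occ | _] := boolP all_occ; last by [].
  suff -> : s \in perfect_tori N by [].
  rewrite inE; apply/andP; split; apply/asboolP => //.
  exact: (reflected_faces_cover (P := idfun) (ltnW S2) all_occ).
- by move=> s _; exact: weight_le1.
rewrite mulr1 ler_pdivrMr //; apply: le_trans card_perfect_tori_le _.
exact: perfect_ratio_le.
Qed.

End ReflectionNorm.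

Lemma limn_esup_le (R : realType) (u : nat -> R) (x : R) (K : nat) :
  (forall n, (K <= n)%N -> u n <= x) -> (limn_esup (fun n => (u n)%:E) <= x%:E)%E.
Proof.
move=> ux; rewrite limn_esup_lim; apply: lime_le; first exact: is_cvg_esups.
exists K => // m /= Km; apply: ub_ereal_sup => _ [n /= mn <-].
by rewrite lee_fin ux // (leq_trans Km).
Qed.

Lemma normR_le (R : realType) (lam : R) a b (g : config -> R) (x : R) (K : nat) :
  (forall S, (K <= S)%N -> (2 <= S)%N -> normRL lam a b 1 1 S.*2 S.*2 g <= x) ->
  (normR lam a b 1 1 g <= x%:E)%E.
Proof.
move=> gx; apply: (limn_esup_le (K := maxn 4 K.*2)) => n; rewrite geq_max => /andP[n4 nK].
have fact_even : n`! = (n`!./2).*2.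
  have /dvdn_fact : (0 < 2 <= n)%N by rewrite (leq_trans _ n4).
  by rewrite dvdn2 => /negbTE ev; rewrite -[LHS]odd_double_half ev.
by rewrite fact_even; apply: gx; have := fact_geq n; lia.
Qed.

Lemma onem_expr4_ge (R : realFieldType) (x : R) : 1 - 4 * x <= (1 - x) ^+ 4.
Proof.
have -> : (1 - x) ^+ 4 = 1 - 4 * x + x ^+ 2 * ((x - 2) ^+ 2 + 2) by ring.
by rewrite lerDl mulr_ge0 ?sqr_ge0 // addr_ge0 ?sqr_ge0.
Qed.

Lemma occupied_rate_gt1 (R : realFieldType) (c mu : R) :
  0 <= c -> 0 < mu -> 4 * c * (1 + mu) < 1 -> 1 < (1 + mu) * (1 - c * mu) ^+ 4.
Proof.
move=> c0 mu0 small; apply: lt_le_trans (_ : 1 < (1 + mu) * (1 - 4 * (c * mu))) _.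
  rewrite -subr_gt0 (_ : _ - 1 = mu * (1 - 4 * c * (1 + mu))); last by ring.
  by rewrite mulr_gt0 // subr_gt0.
by rewrite ler_pM2l ?onem_expr4_ge //; lra.
Qed.

Lemma bernoulli_ineq (R : realFieldType) (h : R) (n : nat) :
  0 <= h -> 1 + n%:R * h <= (1 + h) ^+ n.
Proof.
move=> h0; elim: n => [|n IH]; first by rewrite mul0r addr0 expr0.
rewrite exprS -natr1; have : 0 <= n%:R * h by rewrite mulr_ge0.
nra.
Qed.

Lemma expr_unbounded (R : archiFieldType) (q C : R) : 1 < q ->
  exists K : nat, forall n, (K <= n)%N -> C <= q ^+ n.
Proof.
move=> q1; have q0 : 0 < q - 1 by rewrite subr_gt0.
pose B := Num.max 0 (C / (q - 1)).
have B0 : 0 <= B by rewrite le_max lexx.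
exists (Num.Def.archi_bound B) => n Kn.
have CB : C <= B * (q - 1) by rewrite -ler_pdivrMr // le_max lexx orbT.
have Bn : B <= n%:R by apply: ltW; apply: lt_le_trans (archi_boundP B0) _; rewrite ler_nat.
have := bernoulli_ineq n (ltW q0); rewrite [1 + (q - 1)]addrC subrK.
apply: le_trans; apply: le_trans CB _; rewrite -[X in X <= _]add0r lerD //.
by rewrite ler_pM2r.
Qed.

Lemma powR_Nhalf_lt (R : realType) (lam eps : R) : 0 < eps -> eps ^-2 < lam ->
  lam `^ (- 2^-1) < eps.
Proof.
move=> eps0 epslam.
have lam0 : 0 < lam by apply: lt_trans epslam; rewrite invr_gt0 exprn_gt0.
rewrite -(ltr_pXn2r (_ : (0 < 2)%N)) ?nnegrE ?powR_ge0 ?ltW //.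
rewrite -powR_mulrn ?powR_ge0 // -powRrM (_ : - 2^-1 * 2%:R = -1); last by field.
by rewrite powR_inv1 ?ltW // -[X in _ < X]invrK ltf_pV2 ?posrE ?invr_gt0 ?exprn_gt0.
Qed.

Lemma eventually_rate_small (R : realType) (c : R) : 0 <= c -> c < 4^-1 ->
  \forall lam \near +oo, 1 <= lam /\ 4 * c * (1 + lam `^ (- 2^-1)) < 1.
Proof.
move=> c0 c4; pose eps := (1 - 4 * c) / (4 * c + 1).
have eps0 : 0 < eps by apply: divr_gt0; lra.
exists (Num.max 1 (eps ^-2)); split; first exact: num_real.
move=> lam; rewrite gt_max => /andP[lam1 epslam]; split; first exact: ltW.
have := powR_Nhalf_lt eps0 epslam; have := powR_ge0 lam (- 2^-1).
set mu := lam `^ _ => mu0 mu_eps.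
have : mu * (4 * c + 1) < 1 - 4 * c by rewrite -ltr_pdivlMr //; lra.
have : 0 <= c * mu by rewrite mulr_ge0.
lra.
Qed.

Unset Implicit Arguments.

Theorem corollary4p5 (R : realType) (a b : int) :
  (forall lam : R, 0 < lam ->
     (normR lam a b 1 1 (vacant_ind R a b) <= (lam `^ (- (4%:R^-1)))%:E)%E) /\
  (forall c : R, c < 4%:R^-1 ->
     \forall lam \near +oo%R,
       (normR lam a b 1 1 (occupied_ind R a b)
          <= (1 - c * lam `^ (- (2%:R^-1)))%:E)%E).
Proof.
split=> [lam lam0 | c c4].
  by apply: (normR_le (K := 0)) => S _ S2; exact: normRL_vacant_le.
pose c' := Num.max c 0.
have c'0 : 0 <= c' by rewrite le_max lexx orbT.
have c'4 : c' < 4^-1 by rewrite gt_max c4 invr_gt0 ltr0n.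
apply: filterS (eventually_rate_small c'0 c'4) => lam [lam1 small].
set mu := lam `^ _ in small *.
have mu0 : 0 < mu by apply: powR_gt0; lra.
have [K hK] := expr_unbounded (16 * (1 + mu) ^+ 2 / mu)
  (occupied_rate_gt1 c'0 mu0 small).
apply: (normR_le (K := K)) => S KS S2.
apply: le_trans (_ : 1 - c' * mu <= _); last by rewrite lerD2l lerN2 ler_pM2r // le_max lexx.
apply: normRL_occupied_le => //; first lra.
by rewrite -ler_pdivrMl // mulrC; exact: hK.
Qed.
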